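(* Let $a\ge 0$, $b$ integers and $0\le k\le a$. Let $a_1,a_2,b_1,b_2$ be integers with $0\le a_1,a_2$, $0\le b_1,b_2$, $a_1+a_2=a-k$, $b_1+b_2=b+2k$. Then $$\sum_{i=0}^{k}\binom{b_1}{i}\binom{b_2}{k-i}\,\Phi(i)=\binom{b+2k}{k}\phi_{2_1}(a_1,b_1)+\binom{b+2k-2}{k-1}\phi_{2_2}(a_1,b_1),$$ where, with $j=k-i$ and $M=4a+2b-4$, $$\Phi(i)=(2a_1+b_1)(2a_2+b_2)(a_1b_2+a_2b_1+2a_1a_2+b_2i+b_1j-2ij)\binom{M}{4a_1+2b_1-2}-(2a_1+b_1)^2(a_1b_2+a_2b_1+2a_1a_2+b_2i+b_1j-2ij)\binom{M}{4a_1+2b_1-1},$$ $$\phi_{2_1}(a_1,b_1)=(2a_1+b_1)(2a_2+b_2)(a_1b_2+a_2b_1+2a_1a_2)\binom{M}{4a_1+2b_1-2}-(2a_1+b_1)^2(a_1b_2+a_2b_1+2a_1a_2)\binom{M}{4a_1+2b_1-1},$$ $$\phi_{2_2}(a_1,b_1)=2(2a_1+b_1)(2a_2+b_2)b_1b_2\binom{M}{4a_1+2b_1-2}-2(2a_1+b_1)^2b_1b_2\binom{M}{4a_1+2b_1-1}.$$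
   Context: Binomial coefficients $\binom{N}{j}$ are $0$ for $j<0$ or $j>N$; $\binom{b+2k-2}{k-1}=0$ for $k=0$. ($\Phi(i)$ equals the $\mathbb{F}_0$ Kontsevich coefficient $\phi_0(a_1+i,a_1+b_1-i)$ computed for the splitting $(a_1+i,b_1-2i)+(a_2+j,b_2-2j)=(a,b)$.) *)

From HB Require Import structures.
From mathcomp Require Import all_boot all_order all_algebra.
Set Implicit Arguments. Unset Strict Implicit. Unset Printing Implicit Defensive.
Import Order.TTheory GRing.Theory Num.Theory.
Local Open Scope ring_scope.

Definition binz (N j : int) : int :=
  if (0 <= j) && (j <= N) then (('C(`|N|, `|j|))%:Z) else 0.

Definition Mval (a b : int) : int := 4 * a + 2 * b - 4.

Definition Phi (a b a1 a2 b1 b2 k i : int) : int :=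
  let j := k - i in
  let L := a1 * b2 + a2 * b1 + 2 * a1 * a2 + b2 * i + b1 * j - 2 * i * j in
  (2 * a1 + b1) * (2 * a2 + b2) * L * binz (Mval a b) (4 * a1 + 2 * b1 - 2)
  - (2 * a1 + b1) ^+ 2 * L * binz (Mval a b) (4 * a1 + 2 * b1 - 1).

Definition phi21 (a b a1 a2 b1 b2 : int) : int :=
  let L := a1 * b2 + a2 * b1 + 2 * a1 * a2 in
  (2 * a1 + b1) * (2 * a2 + b2) * L * binz (Mval a b) (4 * a1 + 2 * b1 - 2)
  - (2 * a1 + b1) ^+ 2 * L * binz (Mval a b) (4 * a1 + 2 * b1 - 1).

Definition phi22 (a b a1 a2 b1 b2 : int) : int :=
  2 * (2 * a1 + b1) * (2 * a2 + b2) * b1 * b2 * binz (Mval a b) (4 * a1 + 2 * b1 - 2)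
  - 2 * (2 * a1 + b1) ^+ 2 * b1 * b2 * binz (Mval a b) (4 * a1 + 2 * b1 - 1).

(* Phi(i), phi21 and phi22 all share the binomial factor
     C = (2a1+b1)(2a2+b2) binom(M, 4a1+2b1-2) - (2a1+b1)^2 binom(M, 4a1+2b1-1),
   namely Phi(i) = L(i) C with L(i) = L0 + b2 i + b1 j - 2 i j (j = k - i),
   phi21 = L0 C and phi22 = 2 b1 b2 C.  After dividing out C and writing
   b1 = n1, b2 = n2, k = K as naturals, the theorem becomes the identity
     sum_i C(n1,i) C(n2,K-i) L(i)
       = C(n1+n2,K) L0 + C(n1+n2-2,K-1) 2 n1 n2.
   The L0 part is Vandermonde's convolution.  The rest follows from the
   moments  sum_i i C(n1,i) C(n2,K-i) = n1 C(n1+n2-1,K-1)  and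
   sum_i i j C(n1,i) C(n2,K-i) = n1 n2 C(n1+n2-2,K-2), both consequences of
   i C(n,i) = n C(n-1,i-1), combined by Pascal's rule. *)
From HB Require Import structures.
From mathcomp Require Import all_boot all_order all_algebra ring.
Import Order.TTheory GRing.Theory Num.Theory.

Lemma vandermonde_reflect n1 n2 K :
  \sum_(i < K.+1) (K - i) * ('C(n1, i) * 'C(n2, K - i))
  = \sum_(i < K.+1) i * ('C(n2, i) * 'C(n1, K - i)).
Proof.
rewrite (reindex_inj rev_ord_inj) /=; apply: eq_bigr => i _.
have hi : (i <= K)%N by rewrite -ltnS.
by rewrite subSS subKn // [X in _ * X]mulnC.
Qed.

(* First moment: sum_i i C(m+1,i) C(n,K+1-i) = (m+1) C(m+n,K), from
   i C(m+1,i) = (m+1) C(m,i-1) and Vandermonde. *)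
Lemma vandermonde_first_moment m n K :
  \sum_(i < K.+2) i * ('C(m.+1, i) * 'C(n, K.+1 - i)) = m.+1 * 'C(m + n, K).
Proof.
rewrite big_ord_recl mul0n add0n -binomial.Vandermonde big_distrr /=.
by apply: eq_bigr => i _; rewrite /bump /= add1n subSS mulnA -mul_bin_diag mulnA.
Qed.

Lemma vandermonde_mixed_moment m n K :
  \sum_(i < K.+3) i * (K.+2 - i) * ('C(m.+1, i) * 'C(n.+1, K.+2 - i))
  = m.+1 * n.+1 * 'C(m + n, K).
Proof.
rewrite big_ord_recl big_ord_recr /= /bump /= !add1n subnn !mul0n muln0 addn0 add0n.
rewrite -binomial.Vandermonde big_distrr /=; apply: eq_bigr => i _.
have hi : (i <= K)%N by rewrite -ltnS.
by rewrite /bump /= add1n subSS subSn // mulnACA -!mul_bin_diag mulnACA.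
Qed.

Lemma weighted_vandermonde n1 n2 K :
  \sum_(i < K.+2) (n2 * i + n1 * (K.+1 - i)) * ('C(n1, i) * 'C(n2, K.+1 - i))
  = 2 * \sum_(i < K.+2) i * (K.+1 - i) * ('C(n1, i) * 'C(n2, K.+1 - i))
    + 2 * n1 * n2 * 'C(n1 + n2 - 2, K).
Proof.
(* If n1 = 0 or n2 = 0 every summand vanishes; otherwise use the moments. *)
case: n1 => [|m1].
  rewrite !muln0 mul0n addn0 !big1 // => i _;
    by case: (nat_of_ord i) => [|j] /=; rewrite ?(muln0, mul0n, addn0).
case: n2 => [|m2].
  rewrite !muln0 mul0n addn0 !big1 // => i _;
    by case: (K.+1 - i)%N => [|j] /=; rewrite ?(muln0, mul0n, addn0).
under eq_bigr do rewrite mulnDl -!mulnA.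
rewrite big_split /= -!big_distrr /= vandermonde_reflect.
rewrite !vandermonde_first_moment addnC.
have -> : (m1.+1 + m2.+1 - 2 = m1 + m2)%N by rewrite addSn addnS !subSS subn0.
case: K => [|K].
  by rewrite big1 ?bin0; [ring | case=> [[|[|j]]]].
rewrite vandermonde_mixed_moment addnS binS addnS [(m2 + m1)%N]addnC binS.
ring.
Qed.

Local Open Scope ring_scope.

Lemma binz_nat (n i : nat) : binz n%:Z i%:Z = 'C(n, i)%:Z.
Proof. by rewrite /binz lez_nat /=; case: leqP => // /bin_small ->. Qed.

(* binz (n1 + n2 - 2) K and the truncated C(n1 + n2 - 2, K) can differ only
   when n1 + n2 < 2, where the factor n1 n2 vanishes anyway. *)
Lemma binz_pred2 (n1 n2 K : nat) :
  binz (n1%:Z + n2%:Z - 2) K%:Z * (2 * n1%:Z * n2%:Z)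
  = (2 * n1 * n2 * 'C(n1 + n2 - 2, K))%N%:Z.
Proof.
case: n1 => [|m1]; first by rewrite !(mulr0, mul0r, muln0, mul0n).
case: n2 => [|m2]; first by rewrite !(mulr0, mul0r, muln0, mul0n).
have -> : m1.+1%:Z + m2.+1%:Z - 2 = (m1 + m2)%N%:Z.
  by rewrite -PoszD addSn addnS -[(m1 + m2).+2]addn2 PoszD addrK.
rewrite binz_nat addSn addnS -[(m1 + m2).+2]addn2 addnK.
by rewrite mulrC !PoszM.
Qed.

Lemma Posz_sum n (F : 'I_n -> nat) :
  (\sum_(i < n) F i)%N%:Z = \sum_(i < n) (F i)%:Z.
Proof. exact: (big_morph Posz PoszD). Qed.

Lemma binomial_weighted_sum (n1 n2 K : nat) (L0 : int) :
  \sum_(0 <= i < K.+1) binz n1 i%:Z * binz n2 (K%:Z - i%:Z)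
    * (L0 + n2%:Z * i%:Z + n1%:Z * (K%:Z - i%:Z) - 2 * i%:Z * (K%:Z - i%:Z))
  = binz (n1%:Z + n2%:Z) K%:Z * L0
    + binz (n1%:Z + n2%:Z - 2) (K%:Z - 1) * (2 * n1%:Z * n2%:Z).
Proof.
rewrite -PoszD binz_nat big_mkord.
case: K => [|K].
  rewrite big_ord1 subrr !binz_nat !bin0.
  by rewrite [binz _ (0 - 1)]/binz /= !(mul1r, mulr0, mul0r, addr0, subr0).
have -> : K.+1%:Z - 1 = K%:Z by rewrite -addn1 PoszD addrK.
rewrite binz_pred2.
pose c (i : nat) := ('C(n1, i) * 'C(n2, K.+1 - i))%N.
have term (i : 'I_K.+2) : binz n1 i%:Z * binz n2 (K.+1%:Z - i%:Z)
    * (L0 + n2%:Z * i%:Z + n1%:Z * (K.+1%:Z - i%:Z) - 2 * i%:Z * (K.+1%:Z - i%:Z))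
  = (c i)%:Z * L0 + ((n2 * i + n1 * (K.+1 - i)) * c i)%N%:Z
    - (2 * (i * (K.+1 - i) * c i))%N%:Z.
  rewrite subzn -1?ltnS // !binz_nat /c !PoszM PoszD; ring.
rewrite (eq_bigr _ (fun i _ => term i)) sumrB big_split /= -mulr_suml.
rewrite -!Posz_sum -big_distrr /= weighted_vandermonde binomial.Vandermonde.
by rewrite /c PoszD; ring.
Qed.

Definition phi_common (a b a1 a2 b1 b2 : int) : int :=
  (2 * a1 + b1) * (2 * a2 + b2) * binz (Mval a b) (4 * a1 + 2 * b1 - 2)
  - (2 * a1 + b1) ^+ 2 * binz (Mval a b) (4 * a1 + 2 * b1 - 1).

Lemma Phi_factor a b a1 a2 b1 b2 k i : Phi a b a1 a2 b1 b2 k i =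
  (a1 * b2 + a2 * b1 + 2 * a1 * a2 + b2 * i + b1 * (k - i) - 2 * i * (k - i))
  * phi_common a b a1 a2 b1 b2.
Proof. by rewrite /Phi /phi_common; ring. Qed.

Lemma phi21_factor a b a1 a2 b1 b2 : phi21 a b a1 a2 b1 b2 =
  (a1 * b2 + a2 * b1 + 2 * a1 * a2) * phi_common a b a1 a2 b1 b2.
Proof. by rewrite /phi21 /phi_common; ring. Qed.

Lemma phi22_factor a b a1 a2 b1 b2 : phi22 a b a1 a2 b1 b2 =
  (2 * b1 * b2) * phi_common a b a1 a2 b1 b2.
Proof. by rewrite /phi22 /phi_common; ring. Qed.

Theorem mainTheorem8 (a b k a1 a2 b1 b2 : int)
  (ha : 0 <= a) (hk0 : 0 <= k) (hka : k <= a)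
  (ha1 : 0 <= a1) (ha2 : 0 <= a2) (hb1 : 0 <= b1) (hb2 : 0 <= b2)
  (hsa : a1 + a2 = a - k) (hsb : b1 + b2 = b + 2 * k) :
  \sum_(0 <= i < (`|k|%N).+1)
      binz b1 (i%:Z) * binz b2 (k - i%:Z) * Phi a b a1 a2 b1 b2 k (i%:Z)
  = binz (b + 2 * k) k * phi21 a b a1 a2 b1 b2
    + binz (b + 2 * k - 2) (k - 1) * phi22 a b a1 a2 b1 b2.
Proof.
rewrite -{}hsb phi21_factor phi22_factor.
set C := phi_common a b a1 a2 b1 b2.
under eq_bigr do rewrite Phi_factor (mulrA _ _ C).
rewrite -mulr_suml !(mulrA _ _ C) -mulrDl; congr (_ * C); clear C.
case: b1 hb1 => [n1|//] _; case: b2 hb2 => [n2|//] _.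
case: k hk0 {hka hsa} => [K|//] _.
exact: binomial_weighted_sum.
Qed.
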